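(* Let $P$ be a 6-stack of rank $n$ and let $Q$ be a retract of $P$ that is a 4-tower, such that $\#(P(0)\cap Q(0))=1$, where $Q(0)$ is the set of minimal elements of $Q$. Then $n\ge 3$ and the poset $P(3,n)$ has a retract that is a 4-tower.
   Context: All posets are finite. For a poset $P$ and $p\in P$, the rank $r(p)$ of $p$ is the largest $m$ such that there is a chain $p_0<\dots<p_m=p$ in $P$. $P$ is ranked of rank $r(P)$ if every maximal chain has exactly $r(P)+1$ elements. For $0\le i\le j$, $P(i,j)=\{p\in P:i\le r(p)\le j\}$, $P(i)=P(i,i)$ (induced order). A subset $Q\subseteq P$ (induced order) is a retract of $P$ if there is an order-preserving $f:P\to Q$ with $f(q)=q$ for all $q\in Q$. The 6-crown $C_6$ is the poset on $\{x_0,x_1,x_2,y_0,y_1,y_2\}$ whose only strict comparabilities are $x_0<y_0>x_1<y_1>x_2<y_2>x_0$. A 6-stack is a ranked poset $P$ of rank $n\ge1$ such that $P(i,i+1)\cong C_6$ for each $0\le i<n$. The ordinal sum of posets $P_1,\dots,P_k$ ($k\ge1$) is their disjoint union ordered by the orders of the $P_i$ together with $p<q$ whenever $p\in P_i,q\in P_j,i<j$. A 4-tower is an ordinal sum of one or more two-element antichains. *)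

From mathcomp Require Import all_boot all_order.
Set Implicit Arguments. Unset Strict Implicit. Unset Printing Implicit Defensive.
Import Order.Theory.

(* A finite poset P is a finPOrderType T (its carrier is all of T);
   subposets are subsets {set T} with the induced order. *)
Section PosetDefs.
Local Open Scope order_scope.
Context {d : Order.disp_t} {T : finPOrderType d}.

Definition is_chain (C : {set T}) : bool :=
  [forall x in C, forall y in C, (x <= y) || (y <= x)].

Definition maximal_chain (C : {set T}) : bool :=
  is_chain C && [forall D : {set T}, (is_chain D && (C \subset D)) ==> (D == C)].

Definition ranked_of_rank (n : nat) : Prop :=
  forall C : {set T}, maximal_chain C -> #|C| = n.+1.

Definition has_chain_below (p : T) (m : nat) : bool :=
  [exists t : (m.+1).-tuple T, sorted (fun x y : T => x < y) t && (last p t == p)].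

(* r(p): the largest m such that there is a chain p_0 < ... < p_m = p
   (any such m satisfies m < #|T|) *)
Definition rank (p : T) : nat :=
  \max_(m < #|T| | has_chain_below p m) m.

Definition rank_set (i j : nat) : {set T} :=
  [set p : T | (i <= rank p)%N && (rank p <= j)%N].

Definition minimal_in (Q : {set T}) : {set T} :=
  [set q in Q | [forall q' in Q, ~~ (q' < q)]].

Definition retract_of (S Q : {set T}) : Prop :=
  Q \subset S /\
  exists f : T -> T,
    (forall x, x \in S -> f x \in Q) /\
    (forall x y, x \in S -> y \in S -> x <= y -> f x <= f y) /\
    (forall q, q \in Q -> f q = q).

(* Q (with induced order) is a 4-tower: isomorphic to an ordinal sum of
   k >= 1 two-element antichains (level lvl q in 0..k-1) *)
Definition four_tower (Q : {set T}) : Prop :=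
  exists (k : nat) (lvl : T -> nat),
    (0 < k)%N /\
    (forall q, q \in Q -> (lvl q < k)%N) /\
    (forall i, (i < k)%N -> #|[set q in Q | lvl q == i]| = 2) /\
    (forall x y, x \in Q -> y \in Q -> x != y -> (x <= y) = (lvl x < lvl y)%N).
End PosetDefs.

(* The 6-crown on 'I_6: indices 0,1,2 are x_0,x_1,x_2 and 3,4,5 are
   y_0,y_1,y_2; x_j < y_i iff j = i or j = i+1 (mod 3). *)
Definition c6le (a b : 'I_6) : bool :=
  (a == b) || [&& (a < 3)%N, (3 <= b)%N &
                  ((nat_of_ord a == b - 3) || (nat_of_ord a == (b - 3).+1 %% 3))]%N.

Section Stack.
Local Open Scope order_scope.
Context {d : Order.disp_t} {T : finPOrderType d}.

Definition iso_C6 (S : {set T}) : Prop :=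
  exists f : 'I_6 -> T,
    injective f /\ [set f a | a : 'I_6] = S /\
    (forall a b, (f a <= f b) = c6le a b).

Definition six_stack (n : nat) : Prop :=
  (1 <= n)%N /\ @ranked_of_rank d T n /\
  (forall i, (i < n)%N -> iso_C6 (@rank_set d T i i.+1)).
End Stack.

From mathcomp Require Import all_boot all_order zify.
Set Implicit Arguments. Unset Strict Implicit. Unset Printing Implicit Defensive.
Import Order.Theory.

(* Let a be the unique minimal element of the 4-tower Q lying in P(0), and b the
   other element of the bottom level of Q.  Since b is incomparable with a, it has
   rank 1, and the crown between ranks 0 and 1 forces the retraction f to send every
   other element of rank 0 to b and every other element of rank 1 strictly above the
   bottom level of Q.  This pins the second level of Q to rank 2.  An element of rank
   at least 3 lies above two rank-1 elements whose images are the two distinct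
   elements of the second level, so f maps P(3,n) into the levels >= 2 of Q; these
   form a 4-tower contained in P(3,n). *)

Section Rank.
Local Open Scope order_scope.
Context {d : Order.disp_t} {T : finPOrderType d}.

Lemma has_chain_belowP (p : T) m : reflect
  (exists s : seq T, [/\ size s = m.+1, sorted <%O s & last p s = p])
  (has_chain_below p m).
Proof.
apply: (iffP existsP) => [[t /andP[st /eqP lt]] | [s [sz st lt]]].
  by exists (val t); rewrite size_tuple.
by exists (@Tuple m.+1 T s (introT eqP sz)); rewrite /= st lt eqxx.
Qed.

Lemma rank_max (p : T) m : has_chain_below p m -> (m <= rank p)%N.
Proof.
move=> chain_m; have /has_chain_belowP[s [sz st _]] := chain_m.
have m_lt : (m < #|T|)%N by rewrite -sz -(card_uniqP (lt_sorted_uniq st)) max_card.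
exact: (leq_bigmax_cond (Ordinal m_lt) chain_m).
Qed.

Lemma rank_chain (p : T) : has_chain_below p (rank p).
Proof.
have T_gt0 : (0 < #|T|)%N by apply/card_gt0P; exists p.
have chain0 : has_chain_below p 0 by apply/has_chain_belowP; exists [:: p].
have : (0 < #|[pred i : 'I_#|T| | has_chain_below p i]|)%N.
  by apply/card_gt0P; exists (Ordinal T_gt0).
case/(eq_bigmax_cond (fun i : 'I_#|T| => nat_of_ord i)) => i chain_i rank_i.
by have -> : rank p = i := rank_i.
Qed.

Lemma rank_lt (x y : T) : x < y -> (rank x < rank y)%N.
Proof.
move=> xy; apply: rank_max; have /has_chain_belowP[s [sz st sx]] := rank_chain x.
apply/has_chain_belowP; exists (rcons s y); rewrite size_rcons sz last_rcons.
split=> //; case: s {sz} st sx => [//|x0 s] /= st sx.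
by rewrite rcons_path st sx.
Qed.

Lemma rank_pred (x : T) r : rank x = r.+1 -> exists2 y, y < x & rank y = r.
Proof.
move=> rx; have /has_chain_belowP[s [sz st sx]] := rank_chain x.
rewrite rx in sz; case/lastP: s sz st sx => [//|s z].
rewrite size_rcons last_rcons => -[sz] st zx; subst z.
case: s sz st => [//|y0 s] sz; rewrite /= rcons_path => /andP[st ylt].
exists (last y0 s) => //; apply/eqP; rewrite eqn_leq -ltnS -rx rank_lt //=.
by apply: rank_max; apply/has_chain_belowP; exists (y0 :: s).
Qed.

Lemma rank_below (x : T) r : (r <= rank x)%N -> exists2 y, y <= x & rank y = r.
Proof.
move rx: (rank x) => m; elim: m x rx => [|m IH] x rx.
  by rewrite leqn0 => /eqP->; exists x.
rewrite leq_eqVlt ltnS => /orP[/eqP-> | r_le]; first by exists x.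
have [y yx ry] := rank_pred rx; have [z zy rz] := IH y ry r_le.
by exists z => //; apply: le_trans zy (ltW yx).
Qed.

Lemma sorted_is_chain (s : seq T) : sorted <%O s -> is_chain [set z in s].
Proof.
rewrite lt_sorted_uniq_le => /andP[_ st]; apply/forallP => x; apply/implyP.
rewrite inE => xs; apply/forallP => y; apply/implyP; rewrite inE => ys.
have le_index := sorted_leq_index le_trans lexx st.
by case: (leqP (index x s) (index y s)) => [|/ltnW] /le_index -> //; rewrite orbT.
Qed.

Lemma is_chain_sub_maximal (C : {set T}) :
  is_chain C -> exists2 D, maximal_chain D & C \subset D.
Proof.
move=> chainC; have C_ok : is_chain C && (C \subset C) by rewrite chainC subxx.
case: (@arg_maxnP _ C (fun D => is_chain D && (C \subset D)) (fun D => #|D|) C_ok)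
  => D /andP[chainD CD] D_max.
exists D => //; rewrite /maximal_chain chainD; apply/forallP => D'.
apply/implyP => /andP[chainD' DD']; rewrite eq_sym eqEcard DD' /=.
by apply: D_max; rewrite chainD' (subset_trans CD DD').
Qed.

Lemma ranked_rank_le n : @ranked_of_rank d T n -> forall x : T, (rank x <= n)%N.
Proof.
move=> ranked x; have /has_chain_belowP[s [sz st _]] := rank_chain x.
have [D maxD sD] := is_chain_sub_maximal (sorted_is_chain st).
have := subset_leq_card sD.
by rewrite (ranked _ maxD) cardsE (card_uniqP (lt_sorted_uniq st)) sz.
Qed.

End Rank.

Definition c6lt (a b : 'I_6) : bool := (b != a) && c6le a b.

(* [ord_enum 6] does not reduce by computation; this explicit enumeration lets the
   finitely many facts about the crown below be checked by evaluation. *)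
Definition ord6_enum : seq 'I_6 :=
  [:: @Ordinal 6 0 isT; @Ordinal 6 1 isT; @Ordinal 6 2 isT;
      @Ordinal 6 3 isT; @Ordinal 6 4 isT; @Ordinal 6 5 isT].

Lemma mem_ord6_enum (a : 'I_6) : a \in ord6_enum.
Proof. by case: a => [[|[|[|[|[|[|//]]]]]] ?]. Qed.

Lemma ord6_all (P : pred 'I_6) : all P ord6_enum -> forall a, P a.
Proof. by move=> /allP allP a; apply: allP (mem_ord6_enum a). Qed.

Lemma ord6_has (P : pred 'I_6) : has P ord6_enum -> exists a, P a.
Proof. by case/hasP=> a _; exists a. Qed.

Lemma c6_rank_witness (a : 'I_6) :
  exists b, if (a < 3)%N then c6lt a b else c6lt b a.
Proof. by apply/ord6_has; move: a; apply/ord6_all. Qed.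

Lemma c6_other_lower_lt (a y b : 'I_6) : (a < 3)%N -> (y < 3)%N -> (3 <= b)%N ->
  y != a -> ~~ c6lt a b -> c6lt y b.
Proof.
have /ord6_all/(_ a)/ord6_all/(_ y)/ord6_all/(_ b) : all (fun a : 'I_6 =>
  all (fun y : 'I_6 => all (fun b : 'I_6 =>
  [==> (a < 3)%N, (y < 3)%N, (3 <= b)%N, y != a, ~~ c6lt a b => c6lt y b])
  ord6_enum) ord6_enum) ord6_enum by [].
by move=> + h1 h2 h3 h4 h5; rewrite h1 h2 h3 h4 h5.
Qed.

Lemma c6_lt_other_upper (a b u : 'I_6) : (a < 3)%N -> (3 <= b)%N -> (3 <= u)%N ->
  u != b -> ~~ c6lt a b -> c6lt a u.
Proof.
have /ord6_all/(_ a)/ord6_all/(_ b)/ord6_all/(_ u) : all (fun a : 'I_6 =>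
  all (fun b : 'I_6 => all (fun u : 'I_6 =>
  [==> (a < 3)%N, (3 <= b)%N, (3 <= u)%N, u != b, ~~ c6lt a b => c6lt a u])
  ord6_enum) ord6_enum) ord6_enum by [].
by move=> + h1 h2 h3 h4 h5; rewrite h1 h2 h3 h4 h5.
Qed.

Lemma c6_upper_gt_other_lower (u a : 'I_6) : (3 <= u)%N -> (a < 3)%N ->
  exists y : 'I_6, [&& (y < 3)%N, y != a & c6lt y u].
Proof.
have /ord6_all/(_ u)/ord6_all/(_ a) : all (fun u : 'I_6 => all (fun a : 'I_6 =>
  [==> (3 <= u)%N, (a < 3)%N =>
       has (fun y : 'I_6 => [&& (y < 3)%N, y != a & c6lt y u]) ord6_enum])
  ord6_enum) ord6_enum by [].
by move=> + h1 h2; rewrite h1 h2 => /ord6_has.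
Qed.

Lemma c6_other_upper (b : 'I_6) : exists u : 'I_6, (3 <= u)%N && (u != b).
Proof. by apply/ord6_has; move: b; apply/ord6_all. Qed.

Lemma c6_common_upper (a1 a2 : 'I_6) : (a1 < 3)%N -> (a2 < 3)%N -> a1 != a2 ->
  exists w : 'I_6, [&& (3 <= w)%N, c6lt a1 w & c6lt a2 w].
Proof.
have /ord6_all/(_ a1)/ord6_all/(_ a2) : all (fun a1 : 'I_6 => all (fun a2 : 'I_6 =>
  [==> (a1 < 3)%N, (a2 < 3)%N, a1 != a2 =>
       has (fun w : 'I_6 => [&& (3 <= w)%N, c6lt a1 w & c6lt a2 w]) ord6_enum])
  ord6_enum) ord6_enum by [].
by move=> + h1 h2 h3; rewrite h1 h2 h3 => /ord6_has.
Qed.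

Section SixStack.
Local Open Scope order_scope.
Context {d : Order.disp_t} {T : finPOrderType d} (n : nat).
Hypothesis stack : @six_stack d T n.

Lemma stack_rank_le (x : T) : (rank x <= n)%N.
Proof. have [_ [ranked _]] := stack; exact: ranked_rank_le ranked x. Qed.

Lemma stack_crown i : (i < n)%N -> exists h : 'I_6 -> T,
  [/\ injective h,
      forall z, rank z = i -> exists2 a, z = h a & (a < 3)%N,
      forall z, rank z = i.+1 -> exists2 a, z = h a & (3 <= a)%N,
      forall a b, (h a < h b) = c6lt a b &
      forall a, rank (h a) = if (a < 3)%N then i else i.+1].
Proof.
move=> lt_in; have [_ [_ crowns]] := stack.
have [h [h_inj [h_img h_le]]] := crowns i lt_in.
have h_lt a b : (h a < h b) = c6lt a b by rewrite lt_def h_le (inj_eq h_inj).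
have h_rank a : (i <= rank (h a) <= i.+1)%N.
  have : h a \in rank_set i i.+1 by rewrite -h_img imset_f.
  by rewrite inE.
have rank_h a : rank (h a) = if (a < 3)%N then i else i.+1.
  have [b] := c6_rank_witness a; have := h_rank a; have := h_rank b.
  by case: ifP => _; rewrite -h_lt => + + /rank_lt; lia.
have h_onto z : (i <= rank z <= i.+1)%N -> exists a, z = h a.
  have : z \in rank_set i i.+1 = (i <= rank z <= i.+1)%N by rewrite inE.
  by move=> <-; rewrite -h_img => /imsetP[a _ ->]; exists a.
exists h; split=> // z rz; have [|a z_eq] := h_onto z; rewrite ?rz ?leqnn ?leqnSn //;
  by exists a => //; move: (rank_h a); rewrite -z_eq rz; case: ifP; lia.
Qed.

Lemma stack_index_lt (x : T) i : rank x = i.+1 -> (i < n)%N.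
Proof. by move=> <-; exact: stack_rank_le. Qed.

Lemma stack_other_lower_lt i (a y b : T) : rank a = i -> rank y = i ->
  rank b = i.+1 -> y != a -> ~~ (a < b) -> y < b.
Proof.
move=> ra ry rb; have [h [h_inj low up h_lt _]] := stack_crown (stack_index_lt rb).
have [a' -> a'_low] := low a ra; have [y' -> y'_low] := low y ry.
have [b' -> b'_up] := up b rb.
rewrite !h_lt (inj_eq h_inj); exact: c6_other_lower_lt.
Qed.

Lemma stack_lt_other_upper i (a b u : T) : rank a = i -> rank b = i.+1 ->
  rank u = i.+1 -> u != b -> ~~ (a < b) -> a < u.
Proof.
move=> ra rb ru; have [h [h_inj low up h_lt _]] := stack_crown (stack_index_lt rb).
have [a' -> a'_low] := low a ra; have [b' -> b'_up] := up b rb.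
have [u' -> u'_up] := up u ru.
rewrite !h_lt (inj_eq h_inj); exact: c6_lt_other_upper.
Qed.

Lemma stack_upper_gt_other_lower i (u a : T) : rank u = i.+1 -> rank a = i ->
  exists y, [/\ rank y = i, y != a & y < u].
Proof.
move=> ru ra; have [h [h_inj low up h_lt rank_h]] := stack_crown (stack_index_lt ru).
have [a' -> a'_low] := low a ra; have [u' -> u'_up] := up u ru.
have [y' /and3P[y'_low y'a y'u]] := c6_upper_gt_other_lower u'_up a'_low.
by exists (h y'); rewrite rank_h y'_low h_lt (inj_eq h_inj).
Qed.

Lemma stack_other_upper i (b : T) : rank b = i.+1 -> exists u, rank u = i.+1 /\ u != b.
Proof.
move=> rb; have [h [h_inj _ up _ rank_h]] := stack_crown (stack_index_lt rb).
have [b' -> b'_up] := up b rb; have [u' /andP[u'_up u'b]] := c6_other_upper b'.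
by exists (h u'); rewrite rank_h ltnNge u'_up (inj_eq h_inj).
Qed.

Lemma stack_common_upper i (a1 a2 : T) : (i < n)%N -> rank a1 = i -> rank a2 = i ->
  a1 != a2 -> exists w, [/\ rank w = i.+1, a1 < w & a2 < w].
Proof.
move=> lt_in r1 r2; have [h [h_inj low _ h_lt rank_h]] := stack_crown lt_in.
have [a1' -> a1'_low] := low a1 r1; have [a2' -> a2'_low] := low a2 r2.
rewrite (inj_eq h_inj) => a12.
have [w /and3P[w_up a1w a2w]] := c6_common_upper a1'_low a2'_low a12.
by exists (h w); rewrite rank_h ltnNge w_up !h_lt.
Qed.

Lemma stack_lt_rank2 j (u x : T) : rank u = j -> rank x = j.+2 -> u < x.
Proof.
move=> ru rx; have [l1 l1x rl1] := rank_pred rx.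
have [l2 [rl2 l21 l2x]] := stack_upper_gt_other_lower rx rl1.
have [ul1 | nul1] := boolP (u < l1); first exact: lt_trans ul1 l1x.
exact: lt_trans (stack_lt_other_upper ru rl1 rl2 l21 nul1) l2x.
Qed.

Lemma stack_lt_of_rank_gap (u x : T) : (rank u + 2 <= rank x)%N -> u < x.
Proof.
rewrite addn2 => /rank_below[z zx rz].
exact: lt_le_trans (stack_lt_rank2 (erefl _) rz) zx.
Qed.

End SixStack.

Section Tower.
Local Open Scope order_scope.
Context {d : Order.disp_t} {T : finPOrderType d} (Q : {set T}) (k : nat) (lvl : T -> nat).
Hypothesis lvl_lt : forall q, q \in Q -> (lvl q < k)%N.
Hypothesis card_level : forall i, (i < k)%N -> #|[set q in Q | lvl q == i]| = 2.
Hypothesis k_gt0 : (0 < k)%N.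
Hypothesis le_lvl :
  forall x y, x \in Q -> y \in Q -> x != y -> (x <= y) = (lvl x < lvl y)%N.

Lemma lt_lvlE (x y : T) : x \in Q -> y \in Q -> (x < y) = (lvl x < lvl y)%N.
Proof.
move=> xQ yQ; have [-> | yx] := eqVneq y x; first by rewrite ltxx ltnn.
by rewrite lt_def yx le_lvl // eq_sym.
Qed.

Lemma le_lvl_eq (x y : T) : x \in Q -> y \in Q -> x <= y -> (lvl y <= lvl x)%N -> x = y.
Proof.
move=> xQ yQ; rewrite le_eqVlt lt_lvlE // => /orP[/eqP // | lt_xy].
by rewrite leqNgt lt_xy.
Qed.

Lemma lvl_lt_upper_bound (x y q : T) : x \in Q -> y \in Q -> q \in Q ->
  x != y -> lvl x = lvl y -> x <= q -> y <= q -> (lvl x < lvl q)%N.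
Proof.
move=> xQ yQ qQ xy lxy; rewrite !le_eqVlt !lt_lvlE // lxy.
case/orP => [/eqP<- | //]; rewrite -lxy ltnn orbF => /eqP yx.
by rewrite yx eqxx in xy.
Qed.

Lemma level_nonempty i : (i < k)%N -> exists2 y, y \in Q & lvl y = i.
Proof.
move/card_level => card2; have : (0 < #|[set q in Q | lvl q == i]|)%N by rewrite card2.
by case/card_gt0P => y; rewrite inE => /andP[yQ /eqP]; exists y.
Qed.

Lemma level_other (x : T) : x \in Q -> exists y, [/\ y \in Q, y != x & lvl y = lvl x].
Proof.
move=> xQ; have x_in : x \in [set q in Q | lvl q == lvl x] by rewrite inE xQ eqxx.
have := card_level (lvl_lt xQ).
rewrite (cardsD1 x) x_in => /eqP; rewrite eqSS => /eqP card1.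
have : (0 < #|[set q in Q | lvl q == lvl x] :\ x|)%N by rewrite card1.
by case/card_gt0P => y; rewrite !inE => /and3P[yx yQ /eqP]; exists y.
Qed.

Lemma minimal_in_tower (q : T) : q \in Q -> (q \in minimal_in Q) = (lvl q == 0).
Proof.
move=> qQ; rewrite inE qQ /=; apply/forallP/idP => [q_min | /eqP lq q'].
  apply: contraT; rewrite -lt0n => lq; have [y yQ ly] := level_nonempty k_gt0.
  by move: (q_min y); rewrite yQ lt_lvlE // ly lq.
by apply/implyP => q'Q; rewrite lt_lvlE // lq.
Qed.

Lemma four_tower_levels_ge m : (m < k)%N -> four_tower [set q in Q | (m <= lvl q)%N].
Proof.
move=> m_lt; exists (k - m), (fun q => lvl q - m); split; [lia | split; [|split]].
- by move=> q; rewrite inE => /andP[/lvl_lt]; lia.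
- move=> i i_lt; rewrite -(card_level (i := i + m)); last by lia.
  apply: eq_card => q; rewrite !inE; case: (q \in Q) => //=.
  by apply/idP/idP; lia.
- move=> x y; rewrite !inE => /andP[xQ lx] /andP[yQ ly] xy; rewrite le_lvl //.
  by apply/idP/idP; lia.
Qed.

Section RetractOntoTower.
Variable n : nat.
Hypothesis stack : @six_stack d T n.
Variable f : T -> T.
Hypothesis f_in : forall x, f x \in Q.
Hypothesis f_mono : {homo f : x y / x <= y}.
Hypothesis f_id : forall q, q \in Q -> f q = q.

Lemma exists_base : #|rank_set 0 0 :&: minimal_in Q| = 1 ->
  exists a b, [/\ a \in Q, b \in Q, b != a, lvl a = 0 /\ lvl b = 0
                & rank a = 0 /\ rank b = 1].
Proof.
move=> /eqP/cards1P[a a_uniq].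
have : a \in rank_set 0 0 :&: minimal_in Q by rewrite a_uniq set11.
rewrite in_setI => /andP[a0 a_min].
have ra : rank a = 0 by move: a0; rewrite inE leqn0 => /eqP.
have aQ : a \in Q by move: a_min; rewrite inE => /andP[].
have la : lvl a = 0 by apply/eqP; rewrite -(minimal_in_tower aQ).
have [b [bQ ba lb]] := level_other aQ; rewrite la in lb.
exists a, b; split=> //; split=> //.
case rb: (rank b) => [|[|r]] //.
  have : b \in rank_set 0 0 :&: minimal_in Q.
    by rewrite in_setI (minimal_in_tower bQ) lb andbT inE rb.
  by rewrite a_uniq inE (negbTE ba).
have : a < b by apply: (stack_lt_of_rank_gap stack); rewrite ra rb.
by rewrite lt_lvlE // la lb.
Qed.

Lemma two_le_lvl_f (x u1 u2 : T) : lvl (f u1) = 1 -> lvl (f u2) = 1 -> f u1 != f u2 ->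
  u1 <= x -> u2 <= x -> (2 <= lvl (f x))%N.
Proof.
move=> l1 l2 f12 u1x u2x; rewrite -l1.
by apply: (lvl_lt_upper_bound _ _ _ f12); rewrite ?l1 ?l2 ?f_mono.
Qed.

Section Base.
Variables a b : T.
Hypotheses (aQ : a \in Q) (bQ : b \in Q) (ba : b != a).
Hypotheses (lvl_a : lvl a = 0) (lvl_b : lvl b = 0).
Hypotheses (rank_a : rank a = 0) (rank_b : rank b = 1).

Lemma base_not_lt : ~~ (a < b).
Proof. by rewrite lt_lvlE // lvl_a lvl_b. Qed.

Lemma f_rank0 (y : T) : rank y = 0 -> y != a -> f y = b.
Proof.
move=> ry ya; have yb := stack_other_lower_lt stack rank_a ry rank_b ya base_not_lt.
apply: le_lvl_eq => //; last by rewrite lvl_b.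
by rewrite -(f_id bQ) f_mono // ltW.
Qed.

Lemma lvl_f_rank1 (u : T) : rank u = 1 -> u != b -> (0 < lvl (f u))%N.
Proof.
move=> ru ub; have au := stack_lt_other_upper stack rank_a rank_b ru ub base_not_lt.
have [y [ry ya yu]] := stack_upper_gt_other_lower stack ru rank_a.
rewrite -lvl_a; apply: (lvl_lt_upper_bound aQ bQ) => //; first by rewrite eq_sym.
- by rewrite lvl_a lvl_b.
- by rewrite -(f_id aQ) f_mono // ltW.
- by rewrite -(f_rank0 ry ya) f_mono // ltW.
Qed.

Lemma f_rank1_eq (u q : T) : rank u = 1 -> u != b -> q \in Q -> lvl q = 1 -> u < q ->
  f u = q.
Proof.
move=> ru ub qQ lq uq; apply: le_lvl_eq => //; last by rewrite lq lvl_f_rank1.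
by rewrite -(f_id qQ) f_mono // ltW.
Qed.

Lemma level1_rank_ge2 (q : T) : q \in Q -> lvl q = 1 -> (2 <= rank q)%N.
Proof.
move=> qQ lq; have : b < q by rewrite lt_lvlE // lvl_b lq.
by move/rank_lt; rewrite rank_b.
Qed.

Lemma level1_gt_rank1 (q : T) : q \in Q -> lvl q = 1 ->
  exists u, [/\ rank u = 1, u != b & u < q].
Proof.
move=> qQ lq; have [z zq rz] := rank_below (level1_rank_ge2 qQ lq).
have [u [ru ub uz]] := stack_upper_gt_other_lower stack rz rank_b.
by exists u; split=> //; apply: lt_le_trans uz zq.
Qed.

Lemma level1_rank2 (q : T) : q \in Q -> lvl q = 1 -> rank q = 2.
Proof.
move=> qQ lq; have := level1_rank_ge2 qQ lq; rewrite leq_eqVlt => /orP[/eqP <- // | r3].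
have [e [eQ eq le]] := level_other qQ; rewrite lq in le.
have [u [ru ub ue]] := level1_gt_rank1 eQ le.
have uq : u < q by apply: (stack_lt_of_rank_gap stack); rewrite ru.
by move: eq; rewrite -(f_rank1_eq ru ub eQ le ue) (f_rank1_eq ru ub qQ lq uq) eqxx.
Qed.

Lemma one_lt_levels : (1 < k)%N.
Proof.
have [u [ru ub]] := stack_other_upper stack rank_b.
by have := lvl_f_rank1 ru ub; have := lvl_lt (f_in u); lia.
Qed.

Lemma rank1_separated : exists u1 u2,
  [/\ rank u1 = 1, rank u2 = 1, lvl (f u1) = 1, lvl (f u2) = 1 & f u1 != f u2].
Proof.
have [c cQ lc] := level_nonempty one_lt_levels.
have [e [eQ ec le]] := level_other cQ; rewrite lc in le.
have [uc [ruc ucb ucc]] := level1_gt_rank1 cQ lc.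
have [ue [rue ueb uee]] := level1_gt_rank1 eQ le.
exists uc, ue.
by rewrite (f_rank1_eq ruc ucb cQ lc ucc) (f_rank1_eq rue ueb eQ le uee) eq_sym.
Qed.

Lemma exists_lvl_f_ge2 : exists w, (2 <= lvl (f w))%N.
Proof.
have [u1 [u2 [r1 r2 l1 l2 f12]]] := rank1_separated.
have u12 : u1 != u2 by apply: contraNneq f12 => ->.
have n_gt1 : (1 < n)%N.
  by rewrite -(level1_rank2 (f_in u1) l1) stack_rank_le.
have [w [_ u1w u2w]] := stack_common_upper stack n_gt1 r1 r2 u12.
by exists w; apply: (two_le_lvl_f l1 l2 f12); apply: ltW.
Qed.

Lemma rank3_lvl_f (x : T) : (3 <= rank x)%N -> (2 <= lvl (f x))%N.
Proof.
move=> rx; have [u1 [u2 [r1 r2 l1 l2 f12]]] := rank1_separated.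
apply: (two_le_lvl_f l1 l2 f12);
  by apply/ltW/(stack_lt_of_rank_gap stack); rewrite ?r1 ?r2.
Qed.

Lemma level2_rank3 (q : T) : q \in Q -> (2 <= lvl q)%N -> (3 <= rank q)%N.
Proof.
move=> qQ lq; have [c cQ lc] := level_nonempty one_lt_levels.
have : c < q by rewrite lt_lvlE // lc.
by move/rank_lt; rewrite (level1_rank2 cQ lc).
Qed.

Lemma tower_retract_rank3 :
  (3 <= n)%N /\ exists R : {set T}, retract_of (rank_set 3 n) R /\ four_tower R.
Proof.
have [w w2] := exists_lvl_f_ge2.
have k_gt2 : (2 < k)%N by apply: leq_trans (lvl_lt (f_in w)).
split; first exact: leq_trans (level2_rank3 (f_in w) w2) (stack_rank_le stack _).
exists [set q in Q | (2 <= lvl q)%N]; split; last exact: four_tower_levels_ge.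
split.
  apply/subsetP => q; rewrite !inE => /andP[qQ lq].
  by rewrite level2_rank3 // stack_rank_le.
exists f; split; [|split] => [x | x y _ _ | q].
- by rewrite !inE f_in => /andP[x3 _]; exact: rank3_lvl_f.
- exact: f_mono.
- by rewrite inE => /andP[qQ _]; exact: f_id.
Qed.

End Base.

Lemma tower_retract_of_unique_min : #|rank_set 0 0 :&: minimal_in Q| = 1 ->
  (3 <= n)%N /\ exists R : {set T}, retract_of (rank_set 3 n) R /\ four_tower R.
Proof.
case/exists_base => a [b [aQ bQ ba [la lb] [ra rb]]].
exact: (tower_retract_rank3 aQ bQ ba la lb ra rb).
Qed.

End RetractOntoTower.
End Tower.

Theorem lemma5p7 (d : Order.disp_t) (T : finPOrderType d) (n : nat) (Q : {set T}) :
  @six_stack d T n ->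
  retract_of [set: T] Q ->
  four_tower Q ->
  #|@rank_set d T 0 0 :&: minimal_in Q| = 1 ->
  (3 <= n)%N /\ exists R : {set T}, retract_of (@rank_set d T 3 n) R /\ four_tower R.
Proof.
move=> stack [_ [f [f_in [f_mono f_id]]]].
move=> [k [lvl [k_gt0 [lvl_lt [card_level le_lvl]]]]].
have f_inT x : f x \in Q := f_in x (in_setT x).
have f_monoT : {homo f : x y / (x <= y)%O}.
  by move=> x y; apply: f_mono; rewrite in_setT.
exact: (tower_retract_of_unique_min lvl_lt card_level k_gt0 le_lvl stack
          f_inT f_monoT f_id).
Qed.
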